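(* Let $L\subset\mathbb{R}^{12}$ be a $12$-dimensional lattice and $P_0$ a Delaunay polytope of $L$ with $14$ vertices, whose vertex set $V$ is the disjoint union of four sets $V(\Sigma_1^2),V(\Sigma_2^2)$ (each of size $3$) and $V(\Sigma_1^3),V(\Sigma_2^3)$ (each of size $4$), such that the squared Euclidean distances $d(u,v)=\|u-v\|^2$ between distinct vertices are: $d(u,v)=7$ if $u,v$ lie in the same set $V(\Sigma_i^q)$; $d(u,v)=6$ if $u\in V(\Sigma_i^2)$, $v\in V(\Sigma_i^3)$, $i=1,2$; $d(u,v)=10$ if $u\in V(\Sigma_1^2)$, $v\in V(\Sigma_2^2)$; $d(u,v)=12$ if $u\in V(\Sigma_1^3), v\in V(\Sigma_2^3)$, or $u\in V(\Sigma_1^2), v\in V(\Sigma_2^3)$, or $u\in V(\Sigma_2^2), v\in V(\Sigma_1^3)$. Then: (i) for every $u\in V$, the set $V\setminus\{u\}$ is an $\mathbb{R}$-affine basis of $P_0$; (ii) the $\mathbb{Z}$-module of integral affine dependencies $Y(P_0)=\{y\in\mathbb{Z}^V:\sum_v y(v)v=0,\ \sum_v y(v)=0\}$ is $y\mathbb{Z}$, where $y(v)=3$ on $V(\Sigma_1^2)$, $-3$ on $V(\Sigma_2^2)$, $2$ on $V(\Sigma_2^3)$, $-2$ on $V(\Sigma_1^3)$; (iii) $P_0$ is not $\mathbb{Z}$-basic; (iv) the rank of $P_0$ is $77$.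
   Context: A Delaunay polytope of a lattice $L\subset\mathbb{R}^n$ is a polytope whose vertex set is $L\cap S$, where $S=S(c,r)$ is an empty sphere: $\|a-c\|^2\ge r^2$ for all $a\in L$, and $S\cap L$ contains $n+1$ affinely independent points. For a ring $\mathbb{K}$, a subset $W\subseteq V(P)$ is $\mathbb{K}$-generating if every vertex $w\in V(P)$ can be written $w=\sum_{v\in W}z(v)v$ with $z(v)\in\mathbb{K}$ and $\sum_{v\in W}z(v)=1$; a $\mathbb{K}$-generating set of size $n+1$ is a $\mathbb{K}$-affine basis, and $P$ is $\mathbb{K}$-basic if it has a $\mathbb{K}$-affine basis. For a finite set $V$, the hypermetric cone $HYP(V)$ is the set of functions $d:V\times V\to\mathbb{R}$ with $d(u,v)=d(v,u)$, $d(v,v)=0$, and $\sum_{u,v\in V}b_ub_v d(u,v)\le 0$ for all $b\in\mathbb{Z}^V$ with $\sum_v b_v=1$. The rank of a Delaunay polytope $P$ is the dimension of the minimal face of $HYP(V(P))$ containing $d_P(u,v)=\|u-v\|^2$. *)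

From mathcomp Require Import all_boot all_order all_algebra.
From mathcomp Require Import reals Rstruct.
Set Implicit Arguments. Unset Strict Implicit. Unset Printing Implicit Defensive.
Import Order.TTheory GRing.Theory Num.Theory.
Local Open Scope ring_scope.

Notation RR := Rdefinitions.R.

Section Defs.
Variable R : realType.

Definition sqnorm n (x : 'rV[R]_n) : R := \sum_(i < n) x 0 i ^+ 2.

Definition is_lattice n (L : 'rV[R]_n -> Prop) : Prop :=
  exists B : 'M[R]_n, B \in unitmx /\
    forall x, L x <-> exists z : 'rV[int]_n, x = map_mx intr z *m B.

Definition aff_indep (V : lmodType R) k (w : 'I_k -> V) : Prop :=
  forall a : 'I_k -> R, \sum_(i < k) a i = 0 ->
    \sum_(i < k) a i *: w i = 0 -> forall i, a i = 0.

(* The polytope whose vertex family is v : 'I_m -> 'rV_n (v injective) is a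
   Delaunay polytope of L: there is an empty sphere S(c,r) with
   L \cap S = {v i} containing n+1 affinely independent points. *)
Definition is_delaunay n (L : 'rV[R]_n -> Prop) m (v : 'I_m -> 'rV[R]_n) : Prop :=
  injective v /\
  exists (c : 'rV[R]_n) (r : R),
    (forall a, L a -> r ^+ 2 <= sqnorm (a - c)) /\
    (forall a, (L a /\ sqnorm (a - c) = r ^+ 2) <-> exists i, a = v i) /\
    (exists w : 'I_n.+1 -> 'I_m, aff_indep (fun j => v (w j))).

Definition K_generating (K : pred R) n m (v : 'I_m -> 'rV[R]_n)
    (W : {set 'I_m}) : Prop :=
  forall j : 'I_m, exists z : 'I_m -> R,
    (forall i, z i \in K) /\ \sum_(i in W) z i = 1 /\
    v j = \sum_(i in W) z i *: v i.

Definition K_affine_basis (K : pred R) n m (v : 'I_m -> 'rV[R]_n)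
    (W : {set 'I_m}) : Prop :=
  K_generating K v W /\ #|W| = n.+1.

Definition K_basic (K : pred R) n m (v : 'I_m -> 'rV[R]_n) : Prop :=
  exists W, K_affine_basis K v W.

(* Hypermetric cone on the vertex index set 'I_m; functions V x V -> R are
   represented as m x m matrices. *)
Definition HYP m : 'M[R]_m -> Prop := fun d =>
  (forall u w, d u w = d w u) /\ (forall u, d u u = 0) /\
  forall b : 'I_m -> int, \sum_(u < m) b u = 1 ->
    \sum_(u < m) \sum_(w < m) (b u * b w)%:~R * d u w <= 0.

Definition convex_set (V : lmodType R) (C : V -> Prop) : Prop :=
  forall x y (t : R), C x -> C y -> 0 <= t <= 1 -> C (t *: x + (1 - t) *: y).

Definition is_face (V : lmodType R) (C F : V -> Prop) : Prop :=
  convex_set F /\ (forall x, F x -> C x) /\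
  forall x y (t : R), C x -> C y -> 0 < t < 1 ->
    F (t *: x + (1 - t) *: y) -> F x /\ F y.

Definition min_face (V : lmodType R) (C : V -> Prop) (p : V) : V -> Prop :=
  fun x => forall F, is_face C F -> F p -> F x.

Definition has_dim (V : lmodType R) (S : V -> Prop) (k : nat) : Prop :=
  (exists w : 'I_k.+1 -> V, (forall i, S (w i)) /\ aff_indep w) /\
  ~ (exists w : 'I_k.+2 -> V, (forall i, S (w i)) /\ aff_indep w).

Definition dist_mx n m (v : 'I_m -> 'rV[R]_n) : 'M[R]_m :=
  \matrix_(u, w) sqnorm (v u - v w).

Definition delaunay_rank n m (v : 'I_m -> 'rV[R]_n) (k : nat) : Prop :=
  has_dim (min_face (@HYP m) (dist_mx v)) k.

End Defs.

(* Labelling of the 14 vertices: block 0 = V(Sigma_1^2) (indices 0..2),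
   block 1 = V(Sigma_2^2) (3..5), block 2 = V(Sigma_1^3) (6..9),
   block 3 = V(Sigma_2^3) (10..13). *)
Definition blk (i : 'I_14) : nat :=
  if (i < 3)%N then 0 else if (i < 6)%N then 1 else if (i < 10)%N then 2 else 3.

Definition bdist (p q : nat) : nat :=
  if p == q then 7 else
  match minn p q, maxn p q with
  | 0, 2 | 1, 3 => 6
  | 0, 1 => 10
  | _, _ => 12   (* pairs {2,3}, {0,3}, {1,2} *)
  end%N.

Definition y0 (i : 'I_14) : int :=
  match blk i with 0%N => 3 | 1%N => -3 | 2%N => -2 | _ => 2 end.

(* The integral vector y (3, -3, -2, 2 on the four blocks) has zero sum and
   satisfies sum_(u,w) y_u y_w d(u, w) = 0, hence sum_v y_v v = 0. Since 13 of
   the 14 vertices are affinely independent, the affine dependencies of P0 are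
   exactly the real multiples of y. No entry of y vanishes, so dropping any
   vertex leaves an affine basis; y_0 - y_13 = 1, so the integral dependencies
   are Z y; no entry is a unit, so no 13 vertices generate the last one over Z.

   For the rank: the hypermetric inequalities at b = e_j +- y are tight at d,
   so the minimal face of d lies in the space of symmetric hollow matrices X
   with X y = 0, of dimension C(14, 2) - 14 = 77, with free coordinates at the
   "pivot" pairs. Conversely d can be moved in every such direction X: for
   integral b with sum 1, <b, d b> is an integer, 0 exactly when b is a vertex
   plus a dependency (which X kills), and at most -1 otherwise. *)

From HB Require Import structures.
From mathcomp Require Import all_boot all_order all_algebra.
From mathcomp Require Import reals Rstruct.
From mathcomp Require Import ring lra zify.
Import Order.TTheory GRing.Theory Num.Theory.
Local Open Scope ring_scope.
Set Implicit Arguments. Unset Strict Implicit. Unset Printing Implicit Defensive.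

(** * Euclidean norms and quadratic forms *)

Section Euclid.
Variables (R : realType) (n : nat).
Implicit Types x y z : 'rV[R]_n.

Definition dot x y : R := \sum_(i < n) x 0 i * y 0 i.

Lemma sqnormE x : sqnorm x = dot x x.
Proof. by apply: eq_bigr => i _; rewrite expr2. Qed.

Lemma dotC x y : dot x y = dot y x.
Proof. by apply: eq_bigr => i _; rewrite mulrC. Qed.

Lemma dotBl x y z : dot (x - y) z = dot x z - dot y z.
Proof. by rewrite /dot -sumrB; apply: eq_bigr => i _; rewrite !mxE mulrBl. Qed.

Lemma dotBr x y z : dot z (x - y) = dot z x - dot z y.
Proof. by rewrite dotC dotBl !(dotC z). Qed.

Lemma dot_suml m (a : 'I_m -> R) (x : 'I_m -> 'rV[R]_n) y :
  dot (\sum_(u < m) a u *: x u) y = \sum_(u < m) a u * dot (x u) y.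
Proof.
rewrite /dot; under eq_bigr => i _ do rewrite summxE mulr_suml.
rewrite exchange_big; apply: eq_bigr => u _; rewrite mulr_sumr.
by apply: eq_bigr => i _; rewrite mxE mulrA.
Qed.

Lemma sqnormB x y : sqnorm (x - y) = sqnorm x + sqnorm y - 2 * dot x y.
Proof. by rewrite !sqnormE dotBl !dotBr (dotC y x); ring. Qed.

Lemma sqnorm0 : sqnorm (0 : 'rV[R]_n) = 0.
Proof. by rewrite /sqnorm big1 // => i _; rewrite mxE expr0n. Qed.

Lemma sqnorm_ge0 x : 0 <= sqnorm x.
Proof. by apply: sumr_ge0 => i _; rewrite sqr_ge0. Qed.

Lemma sqnorm_eq0 x : sqnorm x = 0 -> x = 0.
Proof.
move/eqP; rewrite psumr_eq0 => [/allP x0|i _]; last exact: sqr_ge0.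
apply/rowP => i; rewrite mxE; apply/eqP.
by rewrite -sqrf_eq0; exact: (implyP (x0 i (mem_index_enum i))).
Qed.

Lemma sqnormD_le x y : sqnorm (x + y) <= 2 * sqnorm x + 2 * sqnorm y.
Proof.
rewrite /sqnorm !mulr_sumr -big_split /=; apply: ler_sum => i _; rewrite mxE.
by have := sqr_ge0 (x 0 i - y 0 i); nra.
Qed.

Lemma sum_sqnormB m (b : 'I_m -> R) (x : 'I_m -> 'rV[R]_n) :
  \sum_(u < m) \sum_(w < m) b u * b w * sqnorm (x u - x w) =
  2 * (\sum_(u < m) b u) * (\sum_(u < m) b u * sqnorm (x u))
  - 2 * sqnorm (\sum_(u < m) b u *: x u).
Proof.
have -> : sqnorm (\sum_(u < m) b u *: x u) =
    \sum_(u < m) \sum_(w < m) b u * (b w * dot (x u) (x w)).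
  rewrite sqnormE dot_suml; apply: eq_bigr => u _.
  by rewrite dotC dot_suml mulr_sumr; apply: eq_bigr => w _; rewrite dotC.
have -> : \sum_(u < m) \sum_(w < m) b u * b w * sqnorm (x u - x w) =
    \sum_(u < m) \sum_(w < m) (b w * (b u * sqnorm (x u))
      + b u * (b w * sqnorm (x w)) - 2 * (b u * (b w * dot (x u) (x w)))).
  by apply: eq_bigr => u _; apply: eq_bigr => w _; rewrite sqnormB; ring.
rewrite (eq_bigr (fun u => (\sum_(w < m) b w) * (b u * sqnorm (x u))
    + b u * (\sum_(w < m) b w * sqnorm (x w))
    - 2 * (\sum_(w < m) b u * (b w * dot (x u) (x w))))); last first.
  by move=> u _; rewrite sumrB big_split /= -mulr_suml -!mulr_sumr.
rewrite sumrB big_split /= -mulr_sumr -mulr_suml -mulr_sumr; ring.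
Qed.

End Euclid.

Section QuadraticForm.
Variables (R : realType) (m : nat).
Implicit Types (x E : 'M[R]_m) (a b : 'rV[R]_m).

Definition qf x b : R := (b *m x *m b^T) 0 0.

Lemma qfE x b : qf x b = \sum_(u < m) \sum_(w < m) b 0 u * b 0 w * x u w.
Proof.
rewrite /qf mxE; under eq_bigr do rewrite !mxE mulr_suml.
rewrite exchange_big; apply: eq_bigr => u _; apply: eq_bigr => w _; ring.
Qed.

Lemma qfD x1 x2 b : qf (x1 + x2) b = qf x1 b + qf x2 b.
Proof. by rewrite /qf mulmxDr mulmxDl mxE. Qed.

Lemma qfZ s x b : qf (s *: x) b = s * qf x b.
Proof. by rewrite /qf -scalemxAr -scalemxAl mxE. Qed.

Lemma qf_delta x j : qf x (delta_mx 0 j) = x j j.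
Proof. by rewrite /qf trmx_delta -rowE -colE !mxE. Qed.

Lemma qf_shift E a b : E^T = E -> E *m a^T = 0 -> qf E (b + a) = qf E b.
Proof.
move=> symE Ea; have aE : a *m E = 0.
  by have := congr1 trmx Ea; rewrite trmx_mul trmxK symE trmx0.
by rewrite /qf linearD /= mulmxDl aE addr0 mulmxDr -[b *m E *m a^T]mulmxA Ea mulmx0 addr0.
Qed.

Lemma qf_polarize x a b : x^T = x ->
  qf x (a + b) - qf x (a - b) = 4 * (a *m x *m b^T) 0 0.
Proof.
move=> symx; have ba : (b *m x *m a^T) 0 0 = (a *m x *m b^T) 0 0.
  have -> : b *m x *m a^T = (a *m x *m b^T)^T by rewrite !trmx_mul trmxK symx mulmxA.
  by rewrite mxE.
rewrite /qf !linearD /= !linearN /= !(mulmxDl, mulmxDr, mulmxN, mulNmx).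
have entryD (M N : 'M[R]_1) : (M + N) 0 0 = M 0 0 + N 0 0 by rewrite mxE.
have entryN (M : 'M[R]_1) : (- M) 0 0 = - M 0 0 by rewrite mxE.
by rewrite !(entryD, entryN) ba; ring.
Qed.

Lemma qf_le_entries x b :
  `|qf x b| <= (\sum_(u < m) \sum_(w < m) `|x u w|) * sqnorm b.
Proof.
rewrite qfE mulr_suml; apply: (le_trans (ler_norm_sum _ _ _)); apply: ler_sum => u _.
rewrite mulr_suml; apply: (le_trans (ler_norm_sum _ _ _)); apply: ler_sum => w _.
have bsq i : `|b 0 i| ^+ 2 <= sqnorm b.
  rewrite real_normK ?num_real // /sqnorm (bigD1 i) //= lerDl.
  by apply: sumr_ge0 => k _; exact: sqr_ge0.
rewrite !normrM mulrC ler_wpM2l //.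
have := sqr_ge0 (`|b 0 u| - `|b 0 w|); have := bsq u; have := bsq w; nra.
Qed.

End QuadraticForm.

Section QuadraticFormKernel.
Variables (R : realType) (m p : nat).

(* [E] vanishes on the left kernel of [M], so only the component of [b] in the
   row space of [M], namely [b *m M *m pinvmx M], contributes to [qf E b]. *)
Lemma qf_le_kernel (M : 'M[R]_(m, p)) (E : 'M[R]_m) : E^T = E ->
    (forall a : 'rV[R]_m, a *m M = 0 -> E *m a^T = 0) ->
  exists2 K : R, 0 <= K & forall b : 'rV[R]_m, `|qf E b| <= K * sqnorm (b *m M).
Proof.
move=> symE EM; set N := pinvmx M.
exists (\sum_(i < p) \sum_(j < p) `|(N *m E *m N^T) i j|).
  by apply: sumr_ge0 => i _; apply: sumr_ge0.
move=> b; have bM : (b *m M *m N) *m M = b *m M by rewrite mulmxKpV ?submxMl.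
have := EM (b - b *m M *m N); rewrite mulmxBl bM subrr => /(_ erefl) Eb.
rewrite -{1}(subrK (b *m M *m N) b) addrC qf_shift //.
have -> : qf E (b *m M *m N) = qf (N *m E *m N^T) (b *m M).
  by rewrite /qf trmx_mul !mulmxA.
exact: qf_le_entries.
Qed.

End QuadraticFormKernel.

(** * Dimension of a minimal face *)

Section FaceDimension.
Variables (R : realType) (V : lmodType R).

Lemma min_face_midpoint (C : V -> Prop) p e :
  C (p + e) -> C (p - e) -> min_face C p (p + e).
Proof.
move=> Cpe Cme F [_ [_ faceF]] Fp.
have half : 0 < (2^-1 : R) < 1 by rewrite invr_gt0 ltr0n invf_lt1 ?ltr1n.
have mid : 2^-1 *: (p + e) + (1 - 2^-1) *: (p - e) = p.
  rewrite (_ : 1 - 2^-1 = 2^-1 :> R); last by field.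
  rewrite -scalerDr addrACA subrr addr0 -mulr2n -scaler_nat scalerA.
  by rewrite mulVf ?scale1r ?pnatr_eq0.
by apply: (fun H => proj1 (faceF _ _ _ Cpe Cme half H)); rewrite mid.
Qed.

Definition translates k p (E : 'I_k -> V) (i : 'I_k.+1) : V :=
  if unlift ord0 i is Some l then p + E l else p.

Lemma translates0 k p (E : 'I_k -> V) : translates p E ord0 = p.
Proof. by rewrite /translates unlift_none. Qed.

Lemma translates_lift k p (E : 'I_k -> V) l : translates p E (lift ord0 l) = p + E l.
Proof. by rewrite /translates liftK. Qed.

Lemma aff_indep_translates k p (E : 'I_k -> V) (f : {linear V -> 'rV[R]_k}) :
  row_free (\matrix_l f (E l)) -> aff_indep (translates p E).
Proof.
move=> freeE a; rewrite big_ord_recl => /eqP; rewrite addr_eq0 => /eqP a0.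
rewrite big_ord_recl translates0.
under eq_bigr do rewrite translates_lift scalerDr.
rewrite big_split /= -scaler_suml a0 scaleNr addrA addNr add0r => comb.
have coef : \row_l a (lift ord0 l) = 0.
  apply: (row_free_inj freeE).
  rewrite mul0mx -[RHS](linear0 f) -comb linear_sum mulmx_sum_row /=.
  by apply: eq_bigr => l _; rewrite linearZ rowK mxE.
have al (l : 'I_k) : a (lift ord0 l) = 0.
  by have := congr1 (fun r : 'rV[R]_k => r 0 l) coef; rewrite !mxE.
move=> i; case: (unliftP ord0 i) => [l ->|->]; first exact: al.
by rewrite a0 big1 ?oppr0.
Qed.

Lemma aff_indep_subspace_card k (S : V -> Prop) (W : {pred V})
    (f : {linear V -> 'rV[R]_k}) :
  submod_closed W -> (forall x, S x -> x \in W) ->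
  {in W, forall x, f x = 0 -> x = 0} ->
  ~ exists w : 'I_k.+2 -> V, (forall i, S (w i)) /\ aff_indep w.
Proof.
move=> [W0 Wlin] SW finj [w [Sw indep]].
pose D i := w (lift ord0 i) - w ord0.
pose A := \matrix_i f (D i).
have : kermx A != 0.
  rewrite kermx_eq0 /row_free; have := rank_leq_col A.
  by case: eqP => // ->; rewrite ltnn.
case/rowV0Pn => a /sub_kermxP aA a0; apply/negP: a0; rewrite negbK.
pose X := \sum_i a 0 i *: D i.
have WX : X \in W.
  apply: (big_ind (fun x => x \in W)) => // [x y Wx Wy|i _].
    by rewrite -[x]scale1r Wlin.
  by rewrite -[_ *: _]addr0 Wlin // /D addrC -scaleN1r Wlin ?SW.
have X0 : X = 0.
  apply: finj => //; rewrite linear_sum -[RHS]aA mulmx_sum_row.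
  by apply: eq_bigr => i _; rewrite linearZ rowK.
pose b i := if unlift ord0 i is Some j then a 0 j else - \sum_j a 0 j.
have b_lift j : b (lift ord0 j) = a 0 j by rewrite /b liftK.
have b0 : b ord0 = - \sum_j a 0 j by rewrite /b unlift_none.
have Xe : X = - (\sum_j a 0 j) *: w ord0 + \sum_j a 0 j *: w (lift ord0 j).
  rewrite /X /D; under eq_bigr do rewrite scalerBr.
  by rewrite sumrB -scaler_suml scaleNr addrC.
have := indep b; rewrite big_ord_recl.
under eq_bigr do rewrite b_lift; rewrite b0 addNr => /(_ erefl).
rewrite big_ord_recl; under eq_bigr do rewrite b_lift.
rewrite b0 -Xe X0 => /(_ erefl) bz.
by apply/eqP/rowP => j; rewrite mxE -b_lift bz.
Qed.

Lemma min_face_has_dim k (C F : V -> Prop) (W : {pred V})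
    (f : {linear V -> 'rV[R]_k}) p (E : 'I_k -> V) :
  is_face C F -> F p -> (forall x, F x -> x \in W) -> submod_closed W ->
  {in W, forall x, f x = 0 -> x = 0} ->
  (forall l, C (p + E l) /\ C (p - E l)) -> row_free (\matrix_l f (E l)) ->
  has_dim (min_face C p) k.
Proof.
move=> faceF Fp FW Wsub finj CE freeE; split.
  exists (translates p E); split; last exact: aff_indep_translates freeE.
  move=> i; case: (unliftP ord0 i) => [l ->|->]; last by rewrite translates0 => G.
  rewrite translates_lift.
  by have [] := CE l; exact: min_face_midpoint.
apply: (aff_indep_subspace_card Wsub _ finj) => x minx.
exact: FW (minx F faceF Fp).
Qed.

End FaceDimension.

(** * The hypermetric cone *)

Section HypermetricCone.
Variables (R : realType) (m : nat).
Implicit Types (x : 'M[R]_m) (b y : 'I_m -> int).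

Definition intr_row b : 'rV[R]_m := \row_i (b i)%:~R.

Lemma hyp_formE x b :
  \sum_(u < m) \sum_(w < m) (b u * b w)%:~R * x u w = qf x (intr_row b).
Proof.
rewrite qfE; apply: eq_bigr => u _; apply: eq_bigr => w _.
by rewrite !mxE rmorphM.
Qed.

Lemma intr_row_sum b : \sum_i (intr_row b) 0 i = (\sum_i b i)%:~R.
Proof. by rewrite rmorph_sum; apply: eq_bigr => i _; rewrite mxE. Qed.

Lemma HYP_sym x : HYP x -> x^T = x.
Proof. by case=> symx _; apply/matrixP => u w; rewrite mxE symx. Qed.

Lemma HYP_convex : convex_set (@HYP R m).
Proof.
move=> x y t [sx [dx hx]] [sy [dy hy]] /andP[t0 t1].
split; first by move=> u w; rewrite !mxE sx sy.
split; first by move=> u; rewrite !mxE dx dy !mulr0 addr0.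
move=> b sb; rewrite hyp_formE qfD !qfZ.
have := hx b sb; have := hy b sb; rewrite !hyp_formE; nra.
Qed.

Definition tight_face (B : ('I_m -> int) -> Prop) x : Prop :=
  HYP x /\ forall b, B b -> qf x (intr_row b) = 0.

Lemma tight_face_is_face B :
  (forall b, B b -> \sum_i b i = 1) -> is_face (@HYP R m) (tight_face B).
Proof.
move=> B1; split.
  move=> x y t [Hx Bx] [Hy By] t01; split; first exact: HYP_convex.
  by move=> b Bb; rewrite qfD !qfZ Bx ?By // !mulr0 addr0.
split; first by move=> x [].
move=> x y t Hx Hy /andP[t0 t1] [_ Bxy].
have tight b : B b -> qf x (intr_row b) = 0 /\ qf y (intr_row b) = 0.
  move=> Bb; have := Bxy b Bb; rewrite qfD !qfZ.
  have := Hx.2.2 b (B1 b Bb); have := Hy.2.2 b (B1 b Bb); rewrite !hyp_formE.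
  by split; nra.
by split; split=> // b /tight[].
Qed.

Definition unit_shifts y b : Prop :=
  exists j, b = (fun i => (i == j)%:Z + y i) \/ b = (fun i => (i == j)%:Z - y i).

Lemma unit_shifts_sum y : \sum_i y i = 0 -> forall b, unit_shifts y b -> \sum_i b i = 1.
Proof.
move=> y_sum b [j [->|->]]; rewrite ?sumrB ?big_split /= y_sum ?subr0 ?addr0;
  by rewrite (bigD1 j) //= eqxx big1 ?addr0 // => i /negbTE ->.
Qed.

Lemma tight_unit_shifts_mulmx y x :
  tight_face (unit_shifts y) x -> x *m (intr_row y)^T = 0.
Proof.
move=> [Hx tight]; apply/colP => j; rewrite [RHS]mxE.
have plus : intr_row (fun i => (i == j)%:Z + y i) = delta_mx 0 j + intr_row y.
  by apply/rowP => i; rewrite !mxE rmorphD /=; case: (i == j).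
have minus : intr_row (fun i => (i == j)%:Z - y i) = delta_mx 0 j - intr_row y.
  by apply/rowP => i; rewrite !mxE rmorphB /=; case: (i == j).
have := qf_polarize (delta_mx 0 j) (intr_row y) (HYP_sym Hx).
rewrite -plus -minus !tight; [|by exists j; right|by exists j; left].
rewrite subrr -rowE -row_mul mxE => /esym/eqP.
by rewrite mulf_eq0 pnatr_eq0 => /eqP.
Qed.

End HypermetricCone.

(** * Delaunay polytopes *)

Lemma sqnorm_row_mx (R : realType) n (x : 'rV[R]_n) (s : R) :
  sqnorm (row_mx x s%:M) = sqnorm x + s ^+ 2.
Proof.
rewrite /sqnorm big_split_ord big_ord1 /=; congr (_ + _).
  by apply: eq_bigr => i _; rewrite row_mxEl.
by rewrite row_mxEr mxE mulr1n.
Qed.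

Section AffineDependencies.
Variables (R : realType) (n m : nat) (v : 'I_m -> 'rV[R]_n).

Definition hom_mx : 'M[R]_(m, n + 1) := row_mx (\matrix_i v i) (const_mx 1).

Lemma mul_hom_mx (a : 'rV[R]_m) :
  a *m hom_mx = row_mx (\sum_i a 0 i *: v i) (\sum_i a 0 i)%:M.
Proof.
rewrite mul_mx_row mulmx_sum_row; congr row_mx.
  by apply: eq_bigr => i _; rewrite rowK.
apply/rowP => i; rewrite !ord1 !mxE eqxx mulr1n.
by apply: eq_bigr => j _; rewrite mxE mulr1.
Qed.

Lemma hom_mx_kerP (a : 'rV[R]_m) :
  a *m hom_mx = 0 <-> \sum_i a 0 i *: v i = 0 /\ \sum_i a 0 i = 0.
Proof.
rewrite mul_hom_mx -row_mx0; split => [/eq_row_mx[-> /matrixP/(_ 0 0)]|[-> ->]].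
  by rewrite !mxE mulr1n.
by rewrite -scalemx1 scale0r.
Qed.

End AffineDependencies.

Section DelaunayPolytope.
Variables (R : realType) (n m : nat) (L : 'rV[R]_n -> Prop) (v : 'I_m -> 'rV[R]_n).
Variables (c : 'rV[R]_n) (r : R).
Hypothesis latticeL : is_lattice L.
Hypothesis emptyS : forall a, L a -> r ^+ 2 <= sqnorm (a - c).
Hypothesis sphereS : forall a, (L a /\ sqnorm (a - c) = r ^+ 2) <-> exists i, a = v i.

Local Notation d := (dist_mx v).

Lemma vertex_on_sphere i : L (v i) /\ sqnorm (v i - c) = r ^+ 2.
Proof. by apply/sphereS; exists i. Qed.

Lemma lattice_int_comb (b : 'I_m -> int) : L (\sum_i (b i)%:~R *: v i).
Proof.
have [B [_ LB]] := latticeL.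
have L0 : L 0 by apply/LB; exists 0; rewrite map_mx0 mul0mx.
apply: (big_ind L) => // [x y /LB[zx ->] /LB[zy ->]|i _].
  apply/LB; exists (zx + zy); rewrite -mulmxDl; congr (_ *m _).
  by apply/matrixP => p q; rewrite !mxE rmorphD.
have /LB[z ->] := (vertex_on_sphere i).1.
apply/LB; exists (b i *: z); rewrite scalemxAl; congr (_ *m _).
by apply/matrixP => p q; rewrite !mxE rmorphM.
Qed.

Lemma intr_row_comb (b : 'I_m -> int) :
  \sum_i (intr_row R b) 0 i *: v i = \sum_i (b i)%:~R *: v i.
Proof. by apply: eq_bigr => i _; rewrite mxE. Qed.

Lemma qf_dist_mx (b : 'I_m -> int) : \sum_i b i = 1 ->
  qf d (intr_row R b) = 2 * r ^+ 2 - 2 * sqnorm (\sum_i (b i)%:~R *: v i - c).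
Proof.
move=> b1; have b1R : \sum_i ((b i)%:~R : R) = 1 by rewrite -rmorph_sum b1.
rewrite -hyp_formE.
have := sum_sqnormB (fun i => ((b i)%:~R : R)) (fun i => v i - c).
rewrite b1R mulr1.
have -> : \sum_u (b u)%:~R * sqnorm (v u - c) = r ^+ 2.
  by under eq_bigr do rewrite (vertex_on_sphere _).2; rewrite -mulr_suml b1R mul1r.
have -> : \sum_u (b u)%:~R *: (v u - c) = \sum_u (b u)%:~R *: v u - c.
  by under eq_bigr do rewrite scalerBr; rewrite sumrB -scaler_suml b1R scale1r.
move=> <-; apply: eq_bigr => u _; apply: eq_bigr => w _.
by rewrite !mxE rmorphM opprB addrA subrK.
Qed.

Lemma HYP_dist_mx : HYP d.
Proof.
split; first by move=> u w; rewrite !mxE !sqnormB dotC [sqnorm (v u) + _]addrC.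
split; first by move=> u; rewrite mxE subrr sqnorm0.
move=> b b1; rewrite hyp_formE qf_dist_mx //.
by have := emptyS (lattice_int_comb b); lra.
Qed.

Lemma qf_dist_mx_tight (b : 'I_m -> int) : \sum_i b i = 1 ->
  qf d (intr_row R b) = 0 -> exists j, \sum_i (b i)%:~R *: v i = v j.
Proof.
move=> b1; rewrite qf_dist_mx // => tight; apply/sphereS.
by split; [exact: lattice_int_comb | lra].
Qed.

Lemma qf_dist_mx_gap (b : 'I_m -> int) :
  (forall u w, sqnorm (v u - v w) \is a Num.int) -> \sum_i b i = 1 ->
  qf d (intr_row R b) = 0 \/ qf d (intr_row R b) <= -1.
Proof.
move=> dint b1.
have /intrP[z Qz] : qf d (intr_row R b) \is a Num.int.
  rewrite qfE; apply: rpred_sum => u _; apply: rpred_sum => w _.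
  by rewrite !mxE !rpredM ?intr_int.
have : qf d (intr_row R b) <= 0 by rewrite -hyp_formE; exact: HYP_dist_mx.2.2.
rewrite Qz lerz0 => z0; have [->|z1] := eqVneq z 0; [by left | right].
by rewrite (_ : (-1 : R) = (-1 : int)%:~R) ?ler_int //; lia.
Qed.

(* For integral [b] with [\sum_i b i = 1], [qf d b] is either [0], and then [b]
   is a vertex plus an affine dependency, which [E] kills, or at most [-1],
   which dominates [qf E b] up to a constant factor. *)
Theorem HYP_dist_mx_perturb (E : 'M[R]_m) :
  (forall u w, sqnorm (v u - v w) \is a Num.int) ->
  E^T = E -> (forall i, E i i = 0) ->
  (forall a : 'rV[R]_m, a *m hom_mx v = 0 -> E *m a^T = 0) ->
  exists2 eps : R, 0 < eps & forall s, `|s| <= eps -> HYP (d + s *: E).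
Proof.
move=> dint symE diagE kerE.
have [K K0 KE] := qf_le_kernel symE kerE.
pose C := 2 + 2 * r ^+ 2 + 2 * sqnorm c.
have C0 : 0 <= C by have := sqnorm_ge0 c; have := sqr_ge0 r; rewrite /C; lra.
have KC0 : 0 <= K * C by exact: mulr_ge0.
exists (K * C + 1)^-1 => [|s hs]; first by rewrite invr_gt0; lra.
have [symd [diagd _]] := HYP_dist_mx.
have symE' u w : E u w = E w u by rewrite -{1}symE mxE.
split; first by move=> u w; have := symd u w; rewrite !mxE symE' => ->.
split; first by move=> u; have := diagd u; rewrite !mxE diagE mulr0 addr0.
move=> b b1; rewrite hyp_formE qfD qfZ.
have [Q0|Qle] := qf_dist_mx_gap dint b1.
  have [j bj] := qf_dist_mx_tight b1 Q0.
  rewrite Q0 add0r -[intr_row R b](addrNK (delta_mx 0 j)) addrC qf_shift //.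
    by rewrite qf_delta diagE mulr0.
  apply/kerE; rewrite mulmxBl -rowE mul_hom_mx intr_row_comb intr_row_sum b1 bj.
  rewrite /hom_mx row_row_mx rowK; apply/eqP; rewrite subr_eq0; apply/eqP.
  by congr row_mx; apply/rowP => i; rewrite !ord1 !mxE.
set Q := qf d _; set P := qf E _.
have QS := qf_dist_mx b1; rewrite -/Q in QS Qle.
have Pbound : `|P| <= K * C * - Q.
  apply: (le_trans (KE _)); rewrite mul_hom_mx sqnorm_row_mx intr_row_comb.
  rewrite intr_row_sum b1 expr1n -mulrA ler_wpM2l //.
  have := sqnormD_le (\sum_i (b i)%:~R *: v i - c) c; rewrite subrK.
  have Q1 : 0 <= - Q - 1 by lra.
  by have := mulr_ge0 (addr_ge0 (sqr_ge0 r) (sqnorm_ge0 c)) Q1; rewrite /C; lra.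
have sP : s * P <= (K * C + 1)^-1 * (K * C * - Q).
  apply: (le_trans (ler_norm _)); rewrite normrM.
  by apply: ler_pM; rewrite ?normr_ge0.
have : (K * C + 1)^-1 * (K * C * - Q) <= - Q.
  by rewrite ler_pdivrMl ?ltr_wpDl //; nra.
lra.
Qed.

End DelaunayPolytope.

(** * Polytopes with a line of affine dependencies *)

Section AffineDependencyLine.
Variables (R : realType) (V : lmodType R).

Lemma sum_scale_delta (W : lmodType R) k (F : 'I_k -> W) l :
  \sum_(l' < k) (l' == l)%:R *: F l' = F l.
Proof.
by rewrite (bigD1 l) //= eqxx scale1r big1 ?addr0 // => l' /negbTE ->; rewrite scale0r.
Qed.

Lemma aff_indep_inj k (w : 'I_k -> V) : aff_indep w -> injective w.
Proof.
move=> indep i j wij; apply/eqP/negPn/negP => ij.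
pose a l : R := (l == i)%:R - (l == j)%:R.
have := indep a; rewrite /a sumrB.
have one l : \sum_(l' < k) (l' == l)%:R = 1 :> R.
  by rewrite (bigD1 l) //= eqxx big1 ?addr0 // => l' /negbTE ->.
rewrite !one subrr => /(_ erefl).
under eq_bigr do rewrite scalerBl.
rewrite sumrB !sum_scale_delta wij subrr => /(_ erefl i).
by rewrite eqxx (negbTE ij) subr0 => /eqP; rewrite oner_eq0.
Qed.

Variables (k : nat) (x : 'I_k.+1 -> V) (y : 'I_k.+1 -> R).
Hypotheses (y_sum : \sum_i y i = 0) (y_dep : \sum_i y i *: x i = 0).
Hypothesis y_neq0 : forall i, y i != 0.

Lemma aff_dep_collinear (w : 'I_k -> 'I_k.+1) : aff_indep (x \o w) ->
  forall a : 'I_k.+1 -> R, \sum_i a i = 0 -> \sum_i a i *: x i = 0 ->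
  exists t, forall i, a i = t * y i.
Proof.
move=> indep a a_sum a_dep.
have winj : injective w by move=> i j /(congr1 x); exact: (aff_indep_inj indep).
pose Im := [set w j | j in [set: 'I_k]].
have : #|~: Im| == 1%N.
  by have := cardsC Im; rewrite card_imset // cardsT !card_ord; lia.
case/cards1P => u0 Hu0.
have notIm i : i \notin Im -> i = u0 by move=> H; apply/set1P; rewrite -Hu0 inE.
pose t := a u0 / y u0; pose b i := a i - t * y i.
have bu0 : b u0 = 0 by rewrite /b /t divfK ?subrr.
have sum_Im (Z : zmodType) (F : 'I_k.+1 -> Z) :
    F u0 = 0 -> \sum_i F i = \sum_j F (w j).
  move=> Fu0; rewrite (bigID (mem Im)) /= [X in _ + X]big1 ?addr0; last first.
    by move=> i /notIm ->.
  rewrite (big_imset F) /=; last by move=> i j _ _; apply: winj.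
  by apply: eq_bigl => j; rewrite inE.
have b_sum : \sum_j b (w j) = 0.
  by rewrite -sum_Im // /b sumrB a_sum -mulr_sumr y_sum mulr0 subrr.
have b_dep : \sum_j b (w j) *: x (w j) = 0.
  rewrite -(sum_Im _ (fun i => b i *: x i)) ?bu0 ?scale0r //.
  rewrite /b; under eq_bigr do rewrite scalerBl -scalerA.
  by rewrite sumrB a_dep -scaler_sumr y_dep scaler0 subrr.
have bw := indep _ b_sum b_dep.
exists t => i; apply/eqP; rewrite -subr_eq0; apply/eqP.
by case: (boolP (i \in Im)) => [/imsetP[j _ ->]|/notIm ->]; [exact: bw|exact: bu0].
Qed.

End AffineDependencyLine.

Section AffineBases.
Variables (R : realType) (n m : nat) (v : 'I_m -> 'rV[R]_n).

Lemma generating_setD1 (y : 'I_m -> R) u :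
  \sum_i y i = 0 -> \sum_i y i *: v i = 0 -> y u != 0 ->
  K_generating predT v ([set: 'I_m] :\ u).
Proof.
move=> y_sum y_dep yu j.
have sumD1 (Z : zmodType) (F : 'I_m -> Z) :
    \sum_(i in [set: 'I_m] :\ u) F i = \sum_i F i - F u.
  rewrite [\sum_i F i](bigD1 u) //= addrC addrK.
  by apply: eq_bigl => i; rewrite !inE andbT.
case: (eqVneq j u) => [->|ju].
  exists (fun i => - y i / y u); split => //; split.
    by rewrite sumD1 -mulr_suml sumrN y_sum oppr0 mul0r sub0r mulNr opprK divff.
  rewrite sumD1; under eq_bigr do rewrite mulNr scaleNr mulrC -scalerA.
  rewrite sumrN -scaler_sumr y_dep scaler0 oppr0 sub0r.
  by rewrite mulNr scaleNr opprK divff // scale1r.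
have uj : (u == j) = false by rewrite eq_sym (negbTE ju).
exists (fun i => (i == j)%:R); split => //; rewrite !sumD1 uj scale0r !subr0.
rewrite sum_scale_delta; split => //.
by rewrite (bigD1 j) //= eqxx big1 ?addr0 // => i /negbTE ->.
Qed.

(* An integral dependency has a coefficient [-1] at a vertex expressed by a
   unimodular combination of the others. *)
Lemma not_int_basic (y0 : 'I_m -> int) : m = n.+2 ->
  (forall y : 'I_m -> int, \sum_i (y i)%:~R *: v i = 0 -> \sum_i y i = 0 ->
     exists k, forall i, y i = k * y0 i) ->
  (forall i, y0 i \isn't a GRing.unit) -> ~ K_basic (fun x : R => x \is a Num.int) v.
Proof.
move=> mE int_dep y0_nonunit [W [gen cardW]].
have : #|~: W| == 1%N by have := cardsC W; rewrite cardW card_ord; lia.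
case/cards1P => u Wu.
have inW i : (i \in W) = (i != u) by rewrite -[i \in W]negbK -in_setC Wu inE.
have [z [zint [z_sum z_comb]]] := gen u.
pose y i := if i == u then -1 else Num.floor (z i).
have yu : y u = -1 by rewrite /y eqxx.
have yE i : i != u -> (y i)%:~R = z i.
  by move=> /negbTE iu; rewrite /y iu; apply/eqP; rewrite -intrEfloor zint.
have sumW (Z : zmodType) (F : 'I_m -> Z) : \sum_i F i = F u + \sum_(i in W) F i.
  by rewrite (bigD1 u) //=; congr (_ + _); apply: eq_bigl => i; rewrite inW.
have y_dep : \sum_i (y i)%:~R *: v i = 0.
  rewrite sumW yu scaleN1r z_comb addrC; apply/eqP; rewrite subr_eq0; apply/eqP.
  by apply: eq_bigr => i; rewrite inW => /yE ->.
have y_sum : \sum_i y i = 0.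
  apply: (@intr_inj R); rewrite rmorph_sum rmorph0 sumW yu rmorphN1 -z_sum.
  have -> : \sum_(i in W) ((y i)%:~R : R) = \sum_(i in W) z i.
    by apply: eq_bigr => i; rewrite inW => /yE.
  by rewrite addNr.
have [k yk] := int_dep y y_dep y_sum.
have := yk u; rewrite yu => yu_k; apply/negP: (y0_nonunit u); apply/negPn.
by apply/unitrPr; exists (- k); rewrite mulrN mulrC -yu_k opprK.
Qed.

(* The real multiple [t] is the integer [y i - y j] since [y0 i - y0 j = 1]. *)
Lemma int_deps_line (y0 : 'I_m -> int) i j : y0 i - y0 j = 1 ->
  \sum_l (y0 l)%:~R *: v l = 0 -> \sum_l y0 l = 0 ->
  (forall a : 'I_m -> R, \sum_l a l = 0 -> \sum_l a l *: v l = 0 ->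
     exists t, forall l, a l = t * (y0 l)%:~R) ->
  forall y : 'I_m -> int, (\sum_l (y l)%:~R *: v l = 0 /\ \sum_l y l = 0) <->
    exists k, forall l, y l = k * y0 l.
Proof.
move=> y0ij y0_dep y0_sum line y; split => [[y_dep y_sum]|[k yk]].
  have [|t yt] := line _ _ y_dep; first by rewrite -rmorph_sum y_sum.
  have {}yt l : (y l)%:~R = t * (y0 l)%:~R := yt l.
  have tE : t = (y i - y j)%:~R by rewrite intrB !yt -mulrBr -intrB y0ij mulr1.
  by exists (y i - y j) => l; apply: (@intr_inj R); rewrite intrM yt tE.
split; last by under eq_bigr do rewrite yk; rewrite -mulr_sumr y0_sum mulr0.
under eq_bigr do rewrite yk intrM -scalerA.
by rewrite -scaler_sumr y0_dep scaler0.
Qed.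

End AffineBases.

(** * Pivot coordinates on symmetric hollow matrices *)

(* Pivot pairs are the [(p, q)] with [0 < p < q] and [(p, q) <> (1, 2)], the
   latter encoded as [p + q != 3]. They are free coordinates on the symmetric
   hollow matrices [X] with [X *m y = 0] as soon as [y 0], [y 1], [y 2] are
   nonzero. *)
Definition pivot_pair n (i j : 'I_n) : bool := [&& 0 < i, i < j & i + j != 3]%N.

(* Listed over [nat] so that its size computes; enumerations of finite types
   do not reduce. *)
Definition pivot_seq n : seq (nat * nat) :=
  [seq pq <- allpairs pair (iota 0 n) (iota 0 n)
     | [&& 0 < pq.1, pq.1 < pq.2 & pq.1 + pq.2 != 3]%N].

Section PivotPositions.
Variable n : nat.

Definition pivot_pos (l : 'I_(size (pivot_seq n.+1))) : 'I_n.+1 * 'I_n.+1 :=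
  (inord (nth (0, 0) (pivot_seq n.+1) l).1, inord (nth (0, 0) (pivot_seq n.+1) l).2)%N.

Lemma mem_pivot_seq (i j : 'I_n.+1) :
  ((i : nat, j : nat) \in pivot_seq n.+1) = pivot_pair i j.
Proof.
rewrite mem_filter; apply/andb_idr => _.
by apply/allpairsP; exists (i : nat, j : nat); rewrite !mem_iota !ltn_ord.
Qed.

Lemma pivot_seq_bound pq : pq \in pivot_seq n.+1 -> (pq.1 < n.+1)%N /\ (pq.2 < n.+1)%N.
Proof.
rewrite mem_filter => /andP[_ /allpairsP[[p q] [hp hq ->]]].
by move: hp hq; rewrite !mem_iota.
Qed.

Lemma pivot_posE l :
  ((pivot_pos l).1 : nat, (pivot_pos l).2 : nat) = nth (0, 0)%N (pivot_seq n.+1) l.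
Proof.
have /pivot_seq_bound[h1 h2] := mem_nth (0, 0)%N (ltn_ord l).
by rewrite /pivot_pos /= !inordK //; case: nth.
Qed.

Lemma pivot_pos_pair l : pivot_pair (pivot_pos l).1 (pivot_pos l).2.
Proof. by rewrite -mem_pivot_seq pivot_posE mem_nth. Qed.

Lemma pivot_pos_inj : injective pivot_pos.
Proof.
move=> l l' /(congr1 (fun pq : 'I_n.+1 * 'I_n.+1 => (pq.1 : nat, pq.2 : nat))).
rewrite /= !pivot_posE.
have uniq_seq : uniq (pivot_seq n.+1).
  by rewrite filter_uniq // allpairs_uniq ?iota_uniq // => -[? ?] [? ?].
by move/eqP; rewrite nth_uniq // => /eqP; apply: val_inj.
Qed.

Lemma pivot_pos_onto (i j : 'I_n.+1) : pivot_pair i j -> exists l, pivot_pos l = (i, j).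
Proof.
rewrite -mem_pivot_seq -index_mem => ij.
exists (Ordinal ij); apply/eqP; rewrite xpair_eqE -!val_eqE /=.
have := pivot_posE (Ordinal ij); rewrite /= nth_index -?index_mem // => -[-> ->].
by rewrite !eqxx.
Qed.

End PivotPositions.

Section SymHollowKernel.
Variables (R : realType) (n : nat) (y : 'cV[R]_n).

Definition sym_hollow_ker : {pred 'M[R]_n} :=
  [pred X | [&& X^T == X, [forall i, X i i == 0] & X *m y == 0]].

Lemma sym_hollow_kerP X :
  reflect [/\ X^T = X, forall i, X i i = 0 & X *m y = 0] (X \in sym_hollow_ker).
Proof.
apply: (iffP and3P) => [[/eqP ? /forallP d /eqP ?]|[-> d ->]]; last first.
  by split=> //; apply/forallP => i; rewrite d.
by split=> // i; apply/eqP/d.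
Qed.

Lemma sym_hollow_ker_submod : submod_closed sym_hollow_ker.
Proof.
split; first by apply/sym_hollow_kerP; rewrite trmx0 mul0mx; split=> // i; rewrite mxE.
move=> a X Y /sym_hollow_kerP[sX dX yX] /sym_hollow_kerP[sY dY yY].
apply/sym_hollow_kerP; split.
- by rewrite linearD linearZ /= sX sY.
- by move=> i; rewrite !mxE dX dY mulr0 addr0.
- by rewrite mulmxDl -scalemxAl yX yY scaler0 addr0.
Qed.

End SymHollowKernel.

Section PivotCoordinates.
Variables (R : realType) (n : nat).

Definition pivot_coords (X : 'M[R]_n.+1) : 'rV[R]_(size (pivot_seq n.+1)) :=
  \row_l X (pivot_pos l).1 (pivot_pos l).2.

Fact pivot_coords_is_linear : linear pivot_coords.
Proof. by move=> a X Y; apply/rowP => l; rewrite !mxE. Qed.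

HB.instance Definition _ := GRing.isLinear.Build R 'M[R]_n.+1 _ _ pivot_coords
  pivot_coords_is_linear.

End PivotCoordinates.

Section ThreeFirstIndices.
Variable m : nat.

Definition ord_1 : 'I_m.+3 := lift ord0 ord0.
Definition ord_2 : 'I_m.+3 := lift ord0 (lift ord0 ord0).
Definition ord_tail (q : 'I_m) : 'I_m.+3 := lift ord0 (lift ord0 (lift ord0 q)).

Lemma val_ord_1 : ord_1 = 1%N :> nat. Proof. by []. Qed.
Lemma val_ord_2 : ord_2 = 2%N :> nat. Proof. by []. Qed.
Lemma val_ord_tail q : ord_tail q = q.+3 :> nat. Proof. by []. Qed.

Variant ord3_spec : 'I_m.+3 -> Type :=
  | Ord3_0 : ord3_spec ord0
  | Ord3_1 : ord3_spec ord_1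
  | Ord3_2 : ord3_spec ord_2
  | Ord3_tail q : ord3_spec (ord_tail q).

Lemma ord3P i : ord3_spec i.
Proof.
case: (unliftP ord0 i) => [j ->|->]; last exact: Ord3_0.
case: (unliftP ord0 j) => [k ->|->]; last exact: Ord3_1.
case: (unliftP ord0 k) => [q ->|->]; [exact: Ord3_tail | exact: Ord3_2].
Qed.

Lemma big_ord3 (V : nmodType) (F : 'I_m.+3 -> V) :
  \sum_i F i = F ord0 + F ord_1 + F ord_2 + \sum_q F (ord_tail q).
Proof. by rewrite !big_ord_recl !addrA. Qed.

End ThreeFirstIndices.

Arguments ord_1 {m}.
Arguments ord_2 {m}.
Arguments ord_tail {m}.

Section PivotUnit.
Variables (R : realType) (n : nat).

Definition pivot_unit l : 'M[R]_n.+1 :=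
  delta_mx (pivot_pos l).1 (pivot_pos l).2 + delta_mx (pivot_pos l).2 (pivot_pos l).1.

Lemma pivot_unit_sym l : (pivot_unit l)^T = pivot_unit l.
Proof. by rewrite linearD /= !trmx_delta addrC. Qed.

Lemma pivot_unit_diag l i : pivot_unit l i i = 0.
Proof.
have /and3P[_ lt _] := pivot_pos_pair l.
have ne : (pivot_pos l).1 != (pivot_pos l).2 by rewrite -val_eqE ltn_eqF.
have never a b : a != b -> (i == a) && (i == b) = false.
  by move=> ab; apply/negbTE; apply: contra ab => /andP[/eqP <- /eqP <-].
by rewrite !mxE !never ?addr0 // eq_sym.
Qed.

Lemma pivot_coords_unit l : pivot_coords (pivot_unit l) = delta_mx 0 l.
Proof.
apply/rowP => l'; rewrite !mxE eqxx andTb.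
have /and3P[_ lt' _] := pivot_pos_pair l'; have /and3P[_ lt _] := pivot_pos_pair l.
have -> :
    ((pivot_pos l').1 == (pivot_pos l).2) && ((pivot_pos l').2 == (pivot_pos l).1) = false.
  by apply/negbTE/negP => /andP[/eqP e1 /eqP e2]; move: lt lt'; rewrite e1 e2; lia.
by rewrite addr0 -xpair_eqE -!surjective_pairing (inj_eq (@pivot_pos_inj _)).
Qed.

End PivotUnit.

Section PivotBasis.
Variables (R : realType) (m : nat) (y : 'cV[R]_m.+3).
Local Notation y0 := (y ord0 0).
Local Notation y1 := (y ord_1 0).
Local Notation y2 := (y ord_2 0).
Local Notation yt q := (y (ord_tail q) 0).

Section OffPivot.
Variable X : 'M[R]_m.+3.
Hypotheses (symX : X^T = X) (diagX : forall i, X i i = 0).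
Hypothesis pivotX : forall i j, pivot_pair i j -> X i j = 0.

Lemma offpivot_eq0 (i j : 'I_m.+3) :
  (0 < i)%N -> (0 < j)%N -> (i + j != 3)%N -> X i j = 0.
Proof.
move=> i0 j0 ij3; case: (ltngtP i j) => [ij|ji|/val_inj <-]; last exact: diagX.
  by apply: pivotX; rewrite /pivot_pair i0 ij.
by rewrite -[X]symX mxE; apply: pivotX; rewrite /pivot_pair j0 ji addnC.
Qed.

Lemma offpivot_mulmx :
  [/\ forall q, (X *m y) (ord_tail q) 0 = X (ord_tail q) ord0 * y0,
      (X *m y) ord_1 0 = X ord_1 ord0 * y0 + X ord_1 ord_2 * y2,
      (X *m y) ord_2 0 = X ord_2 ord0 * y0 + X ord_2 ord_1 * y1
    & (X *m y) ord0 0 = X ord0 ord_1 * y1 + X ord0 ord_2 * y2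
        + \sum_q X ord0 (ord_tail q) * yt q].
Proof.
have Z (i j : 'I_m.+3) : (0 < i)%N -> (0 < j)%N -> (i + j != 3)%N -> X i j * y j 0 = 0.
  by move=> *; rewrite offpivot_eq0 ?mul0r.
split=> [q|||]; rewrite mxE big_ord3 ?diagX ?mul0r ?add0r ?addr0 //.
- rewrite (Z _ ord_1) ?(Z _ ord_2) ?addr0;
    try (rewrite ?val_ord_tail ?val_ord_1 ?val_ord_2; lia).
  rewrite big1 ?addr0 // => q' _; rewrite Z // !val_ord_tail; lia.
- by rewrite big1 ?addr0 // => q _; rewrite Z // val_ord_1 val_ord_tail.
- by rewrite big1 ?addr0 // => q _; rewrite Z // val_ord_2 val_ord_tail.
Qed.

End OffPivot.

Section Fill.
Variable t : 'cV[R]_m.+3.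

(* The unique matrix supported off the pivots with [fill *m y = t]: row
   [q >= 3] forces the entry [(0, q)], and rows [0, 1, 2] give a regular
   [3 x 3] system (determinant [-2 y0 y1 y2]) for the entries [(0, 1)],
   [(0, 2)], [(1, 2)]. *)
Definition fill_corner : R :=
  let s := t ord0 0 - \sum_q yt q * t (ord_tail q) 0 / y0 in
  (y1 * t ord_1 0 + y2 * t ord_2 0 - y0 * s) / (2 * y1 * y2).

Definition fill_edge (j : 'I_m.+3) : R :=
  if j == 0 :> nat then 0
  else if j == 1 :> nat then (t ord_1 0 - y2 * fill_corner) / y0
  else if j == 2 :> nat then (t ord_2 0 - y1 * fill_corner) / y0
  else t j 0 / y0.

Definition fill : 'M[R]_m.+3 := \matrix_(i, j)
  if i == 0 :> nat then fill_edge j else if j == 0 :> nat then fill_edge i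
  else if (i + j == 3)%N then fill_corner else 0.

Lemma fill_sym : fill^T = fill.
Proof.
apply/matrixP => i j; rewrite !mxE addnC.
case: (i =P 0 :> nat) => i0; case: (j =P 0 :> nat) => j0 //.
by rewrite /fill_edge i0 j0.
Qed.

Lemma fill_diag i : fill i i = 0.
Proof.
rewrite mxE; case: (i =P 0 :> nat) => [i0|i0]; first by rewrite /fill_edge i0.
by have -> : (i + i == 3)%N = false by lia.
Qed.

Lemma fill_pivot i j : pivot_pair i j -> fill i j = 0.
Proof. by case/and3P => i0 ij ij3; rewrite mxE !ifN //; lia. Qed.

End Fill.

Definition pivot_basis l : 'M[R]_m.+3 := pivot_unit R l - fill (pivot_unit R l *m y).

Lemma pivot_coords_basis l : pivot_coords (pivot_basis l) = delta_mx 0 l.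
Proof.
rewrite linearB /= pivot_coords_unit -[RHS]subr0; congr (_ - _).
by apply/rowP => l'; rewrite [LHS]mxE [RHS]mxE fill_pivot ?pivot_pos_pair.
Qed.

Section NonzeroHead.
Hypotheses (y0_neq0 : y0 != 0) (y1_neq0 : y1 != 0) (y2_neq0 : y2 != 0).

Lemma sym_hollow_ker_pivot_inj X :
  X \in sym_hollow_ker y -> pivot_coords X = 0 -> X = 0.
Proof.
case/sym_hollow_kerP => symX diagX Xy coords0.
have pivotX i j : pivot_pair i j -> X i j = 0.
  case/pivot_pos_onto => l pl.
  have := congr1 (fun r : 'rV[R]_(size (pivot_seq m.+3)) => r 0 l) coords0.
  by rewrite !mxE pl.
have symX' i j : X i j = X j i by rewrite -{1}symX mxE.
have y0K z : z * y0 = 0 -> z = 0 by move=> z0; apply: (mulIf y0_neq0); rewrite z0 mul0r.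
have [rowT row1 row2 row0] := offpivot_mulmx symX diagX pivotX.
rewrite Xy !mxE in row1 row2 row0.
rewrite [X ord_1 ord0]symX' in row1.
rewrite [X ord_2 ord0]symX' [X ord_2 ord_1]symX' in row2.
have tail0 q : X ord0 (ord_tail q) = 0 by rewrite symX'; apply: y0K; rewrite -rowT Xy mxE.
rewrite big1 ?addr0 in row0; last by move=> q _; rewrite tail0 mul0r.
have c0 : X ord_1 ord_2 = 0.
  have : 2 * y1 * y2 * X ord_1 ord_2 = 0.
    rewrite (_ : _ * X _ _ = y1 * (X ord0 ord_1 * y0 + X ord_1 ord_2 * y2)
      + y2 * (X ord0 ord_2 * y0 + X ord_1 ord_2 * y1)
      - y0 * (X ord0 ord_1 * y1 + X ord0 ord_2 * y2)); last by ring.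
    by rewrite -row1 -row2 -row0 !mulr0 addr0 subr0.
  by move/eqP; rewrite !mulf_eq0 pnatr_eq0 (negbTE y1_neq0) (negbTE y2_neq0) => /eqP.
have a0 : X ord0 ord_1 = 0 by apply: y0K; rewrite [RHS]row1 c0 mul0r addr0.
have b0 : X ord0 ord_2 = 0 by apply: y0K; rewrite [RHS]row2 c0 mul0r addr0.
apply/matrixP => i j; rewrite mxE.
case: (ord3P i) => [|||qi]; case: (ord3P j) => [|||qj];
  rewrite ?diagX ?(symX' _ ord0) ?(symX' ord_2 ord_1) ?a0 ?b0 ?c0 ?tail0 //;
  apply: (offpivot_eq0 symX diagX pivotX);
  by rewrite ?val_ord_1 ?val_ord_2 ?val_ord_tail; lia.
Qed.

Lemma fill_mulmx t : fill t *m y = t.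
Proof.
have [rowT row1 row2 row0] := offpivot_mulmx (fill_sym t) (fill_diag t) (@fill_pivot t).
have e1 : fill_edge t ord_1 = (t ord_1 0 - y2 * fill_corner t) / y0 by [].
have e2 : fill_edge t ord_2 = (t ord_2 0 - y1 * fill_corner t) / y0 by [].
have et q : fill_edge t (ord_tail q) = t (ord_tail q) 0 / y0 by [].
apply/colP => i; case: (ord3P i) => [|||q].
- rewrite row0 !mxE /= e1 e2; under eq_bigr do rewrite mxE /= et mulrC mulrA.
  rewrite /fill_corner; set S := \sum_q _.
  by field; rewrite ?y0_neq0 ?y1_neq0 ?y2_neq0 ?pnatr_eq0.
- rewrite row1 !mxE /= e1 /fill_corner; field.
  by rewrite ?y0_neq0 ?y1_neq0 ?y2_neq0 ?pnatr_eq0.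
- rewrite row2 !mxE /= e2 /fill_corner; field.
  by rewrite ?y0_neq0 ?y1_neq0 ?y2_neq0 ?pnatr_eq0.
- by rewrite rowT !mxE /= et divfK.
Qed.

Lemma pivot_basis_ker l : pivot_basis l \in sym_hollow_ker y.
Proof.
apply/sym_hollow_kerP; split.
- by rewrite linearB /= pivot_unit_sym fill_sym.
- move=> i; rewrite /pivot_basis; set F := fill _.
  have -> : (pivot_unit R l - F) i i = pivot_unit R l i i - F i i by rewrite !mxE.
  by rewrite pivot_unit_diag fill_diag subr0.
- by rewrite mulmxBl fill_mulmx subrr.
Qed.

End NonzeroHead.

End PivotBasis.

Lemma row_free_diag (R : fieldType) k (d : 'rV[R]_k) :
  (forall l, d 0 l != 0) -> row_free (diag_mx d).
Proof. by move=> d0; rewrite row_free_unit unitmxE det_diag unitfE; apply/prodf_neq0. Qed.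

Section DelaunayRank.
Variables (R : realType) (n m : nat) (L : 'rV[R]_n -> Prop) (v : 'I_m.+3 -> 'rV[R]_n).
Variables (c : 'rV[R]_n) (r : R) (y : 'I_m.+3 -> int).
Hypothesis latticeL : is_lattice L.
Hypothesis emptyS : forall a, L a -> r ^+ 2 <= sqnorm (a - c).
Hypothesis sphereS : forall a, (L a /\ sqnorm (a - c) = r ^+ 2) <-> exists i, a = v i.
Hypothesis dist_int : forall u w, sqnorm (v u - v w) \is a Num.int.
Hypotheses (y_sum : \sum_i y i = 0) (y_dep : \sum_i (y i)%:~R *: v i = 0).
Hypothesis y_line : forall a : 'I_m.+3 -> R, \sum_i a i = 0 -> \sum_i a i *: v i = 0 ->
  exists t, forall i, a i = t * (y i)%:~R.
Hypotheses (y0_neq0 : y ord0 != 0) (y1_neq0 : y ord_1 != 0) (y2_neq0 : y ord_2 != 0).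

Let ycol : 'cV[R]_m.+3 := (intr_row R y)^T.

Let ycol_neq0 i : y i != 0 -> ycol i 0 != 0.
Proof. by rewrite !mxE intr_eq0. Qed.

Lemma dist_mx_tight : tight_face (unit_shifts y) (dist_mx v).
Proof.
split; first exact: HYP_dist_mx emptyS sphereS.
move=> b sb; rewrite (qf_dist_mx sphereS) ?(unit_shifts_sum y_sum) //.
suff [j ->] : exists j, \sum_i (b i)%:~R *: v i = v j.
  by rewrite (vertex_on_sphere sphereS j).2 subrr.
have intr_bool (e : bool) : ((e : int)%:~R : R) = e%:R by case: e.
have [j [->|->]] := sb; exists j.
  under eq_bigr do rewrite intrD scalerDl intr_bool.
  by rewrite big_split /= y_dep addr0 sum_scale_delta.
under eq_bigr do rewrite intrB scalerBl intr_bool.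
by rewrite sumrB y_dep subr0 sum_scale_delta.
Qed.

Lemma tight_sym_hollow_ker x : tight_face (unit_shifts y) x -> x \in sym_hollow_ker ycol.
Proof.
move=> tx; apply/sym_hollow_kerP; split; first exact: HYP_sym tx.1.
  exact: tx.1.2.1.
exact: tight_unit_shifts_mulmx.
Qed.

Lemma pivot_basis_perturb l : exists2 eps : R, 0 < eps &
  forall s, `|s| <= eps -> HYP (dist_mx v + s *: pivot_basis ycol l).
Proof.
have := pivot_basis_ker (ycol_neq0 y0_neq0) (ycol_neq0 y1_neq0) (ycol_neq0 y2_neq0) l.
case/sym_hollow_kerP => symE diagE Ey.
apply: (HYP_dist_mx_perturb latticeL emptyS sphereS dist_int symE diagE).
move=> a /hom_mx_kerP[a_dep a_sum]; have [t a_y] := y_line a_sum a_dep.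
have -> : a = t *: ycol^T by apply/rowP => i; rewrite !mxE a_y.
by rewrite linearZ /= trmxK -scalemxAr Ey scaler0.
Qed.

Theorem delaunay_rank_pivots : delaunay_rank v (size (pivot_seq m.+3)).
Proof.
have [eps eps0 HYPeps] := fin_all_exists2 pivot_basis_perturb.
rewrite /delaunay_rank.
apply: (min_face_has_dim (f := @pivot_coords R m.+2)
  (E := fun l => eps l *: pivot_basis ycol l)
  (tight_face_is_face R (unit_shifts_sum y_sum)) dist_mx_tight tight_sym_hollow_ker
  (sym_hollow_ker_submod _)).
- exact: sym_hollow_ker_pivot_inj
    (ycol_neq0 y0_neq0) (ycol_neq0 y1_neq0) (ycol_neq0 y2_neq0).
- move=> l; split; first by apply: HYPeps; rewrite ger0_norm // ltW.
  by rewrite -scaleNr; apply: HYPeps; rewrite normrN ger0_norm // ltW.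
- rewrite (_ : \matrix_l _ = diag_mx (\row_l eps l)).
    by apply: row_free_diag => l; rewrite mxE gt_eqF.
  apply/row_matrixP => l; rewrite rowK linearZ /= pivot_coords_basis.
  by apply/rowP => l'; rewrite !mxE eq_sym mulr_natr.
Qed.

End DelaunayRank.

(** * The polytope P0 *)

(* Copies of [blk] and [y0] on [nat], so that sums over ['I_14], once turned
   into sums over [iota] by [big_mkord], evaluate with [vm_compute]. *)
Definition blkn (i : nat) : nat :=
  if (i < 3)%N then 0 else if (i < 6)%N then 1 else if (i < 10)%N then 2 else 3.
Definition y0n (i : nat) : int :=
  match blkn i with 0%N => 3 | 1%N => -3 | 2%N => -2 | _ => 2 end.

Lemma y0_sum : \sum_i y0 i = 0.
Proof. by rewrite -(big_mkord xpredT y0n); apply/eqP; rewrite unlock; vm_compute. Qed.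

Lemma y0_neq0 i : y0 i != 0.
Proof. by rewrite /y0; case: (blk i) => [|[|[|?]]]. Qed.

Lemma y0_nonunit i : y0 i \isn't a GRing.unit.
Proof. by rewrite /y0; case: (blk i) => [|[|[|?]]]. Qed.

Lemma y0_bdist_form : \sum_(u < 14) \sum_(w < 14)
  y0 u * y0 w * (if u == w then 0 else bdist (blk u) (blk w))%:Z = 0.
Proof.
rewrite -(big_mkord xpredT (fun u => \sum_(w < 14)
  y0n u * y0n w * (if u == w then 0 else bdist (blkn u) (blkn w))%:Z)).
under eq_bigr do rewrite -(big_mkord xpredT (fun w =>
  y0n _ * y0n w * (if _ == w then 0 else bdist (blkn _) (blkn w))%:Z)).
by apply/eqP; rewrite unlock; vm_compute.
Qed.

Section BlockDistances.
Variables (R : realType) (v : 'I_14 -> 'rV[R]_12).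
Hypothesis dist :
  forall i j : 'I_14, i != j -> sqnorm (v i - v j) = (bdist (blk i) (blk j))%:R.

Lemma sqnorm_vertexB u w :
  sqnorm (v u - v w) = (if u == w then 0 else bdist (blk u) (blk w))%:R.
Proof. by case: eqP => [->|/eqP uw]; rewrite ?subrr ?sqnorm0 ?dist. Qed.

Lemma y0_dep : \sum_i (y0 i)%:~R *: v i = 0.
Proof.
apply: sqnorm_eq0; have := sum_sqnormB (fun i => ((y0 i)%:~R : R)) v.
rewrite -rmorph_sum y0_sum mulr0 mul0r sub0r.
have -> : \sum_u \sum_w (y0 u)%:~R * (y0 w)%:~R * sqnorm (v u - v w) =
    ((\sum_(u < 14) \sum_(w < 14)
      y0 u * y0 w * (if u == w then 0 else bdist (blk u) (blk w))%:Z)%:~R : R).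
  rewrite rmorph_sum; apply: eq_bigr => u _; rewrite rmorph_sum; apply: eq_bigr => w _.
  by rewrite /= sqnorm_vertexB !intrM -pmulrn.
by rewrite y0_bdist_form mulr0z => /esym/eqP; rewrite oppr_eq0 mulf_eq0 pnatr_eq0 => /eqP.
Qed.

Lemma sqnorm_vertexB_int u w : sqnorm (v u - v w) \is a Num.int.
Proof. by rewrite sqnorm_vertexB rpred_nat. Qed.

End BlockDistances.

Theorem mainTheorem3
  (L : 'rV[RR]_12 -> Prop) (v : 'I_14 -> 'rV[RR]_12) :
  is_lattice L ->
  is_delaunay L v ->
  (forall i j : 'I_14, i != j -> sqnorm (v i - v j) = (bdist (blk i) (blk j))%:R) ->
  [/\ (forall u : 'I_14, K_affine_basis predT v ([set: 'I_14] :\ u)),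
      (forall y : 'I_14 -> int,
         (\sum_(i < 14) (y i)%:~R *: v i = 0 /\ \sum_(i < 14) y i = 0) <->
         (exists k : int, forall i, y i = k * y0 i)),
      ~ K_basic (fun x : RR => x \is a Num.int) v
    & delaunay_rank v 77].
Proof.
move=> latticeL [_ [c [r [emptyS [sphereS [w indep]]]]]] dist.
have y0R_sum : \sum_i ((y0 i)%:~R : RR) = 0 by rewrite -rmorph_sum y0_sum.
have y0R_neq0 i : ((y0 i)%:~R : RR) != 0 by rewrite intr_eq0 y0_neq0.
have dep := y0_dep dist.
have line := aff_dep_collinear y0R_sum dep y0R_neq0 indep.
have int_deps :=
  int_deps_line (y0 := y0) (i := ord0) (j := ord_max) erefl dep y0_sum line.
split=> [u|||].
- split; first exact: generating_setD1 y0R_sum dep (y0R_neq0 u).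
  by have := cardsD1 u [set: 'I_14]; rewrite inE cardsT card_ord => -[].
- exact: int_deps.
- by apply: not_int_basic erefl _ y0_nonunit => y y_dep y_sum; apply/int_deps.
- rewrite (_ : 77%N = size (pivot_seq 14)) //.
  apply: (delaunay_rank_pivots latticeL emptyS sphereS (sqnorm_vertexB_int dist)
    y0_sum dep line); exact: y0_neq0.
Qed.
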